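(* For $n \ge 0$ let $w(n,0)$ denote the number of compositions of $n$ with all parts in $\{1,2\}$ having exactly $0$ water cells. Then \[ \sum_{n \ge 0} w(n,0) q^n = \frac{1}{1-q} + \frac{q^2}{(1-q)^2(1-q^2)} = \frac{1-q+q^3}{1 - 2 q + 2 q^3 - q^4}. \] Moreover, for each $n \ge 0$ the following values are equal: (a) $w(n,0)$; (b) $\lfloor n^2/4 \rfloor + 1$; (c) $w(n-2,0) + n - 1$ (for $n \ge 2$); (d) $2w(n-1,0) - 2w(n-3,0) + w(n-4,0)$ (for $n \ge 4$).
   Context: A composition of $n \ge 0$ is a finite sequence $(c_1,\dots,c_t)$ of positive integers with $c_1+\cdots+c_t=n$; the empty composition is the unique composition of $0$. Let $C_{12}(n)$ be the set of compositions of $n$ all of whose parts lie in $\{1,2\}$. The number of water cells of a composition $(c_1,\dots,c_t)$ is $\sum_{i=1}^{t} \max\bigl(0, \min(\max_{j \le i} c_j, \max_{j \ge i} c_j) - c_i\bigr)$ (the number of unit squares that would hold water poured over its bargraph, in which column $i$ has height $c_i$). For $n,k \ge 0$, $W(n,k)$ is the set of compositions in $C_{12}(n)$ with exactly $k$ water cells and $w(n,k)=|W(n,k)|$. *)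

From mathcomp Require Import all_boot all_order all_algebra.
Set Implicit Arguments. Unset Strict Implicit. Unset Printing Implicit Defensive.
Import GRing.Theory Num.Theory.

Fixpoint seqs12 (m : nat) : seq (seq nat) :=
  match m with
  | 0 => [:: [::]]
  | m'.+1 => [::] :: [seq x :: s | x <- [:: 1; 2], s <- seqs12 m']
  end.

(* C_{12}(n): compositions of n with all parts in {1,2}
   (such a composition has at most n parts). *)
Definition C12 (n : nat) : seq (seq nat) :=
  [seq s <- seqs12 n | (sumn s == n) && all (fun x => x \in [:: 1; 2]) s].

(* Number of water cells of a composition c = (c_1,...,c_t) (0-indexed here):
   sum_i max(0, min(max_{j<=i} c_j, max_{j>=i} c_j) - c_i);
   the truncated nat subtraction realises max(0, _). *)
Definition water (c : seq nat) : nat :=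
  \sum_(0 <= i < size c)
     (minn (\max_(0 <= j < size c | j <= i) nth 0 c j)
           (\max_(0 <= j < size c | i <= j) nth 0 c j) - nth 0 c i).

Definition w (n k : nat) : nat := count (fun c => water c == k) (C12 n).

Definition fps := nat -> int.

Definition fps_add (f g : fps) : fps := fun n => (f n + g n)%R.
Definition fps_mul (f g : fps) : fps :=
  fun n => (\sum_(0 <= i < n.+1) f i * g (n - i)%N)%R.
Definition fps_poly (s : seq int) : fps := fun n => nth 0%R s n.

(* Coefficients 0..n of the reciprocal 1/f of a series f with f 0 = 1:
   g_0 = 1, g_n = - sum_{k<n} f_{n-k} g_k. *)
Fixpoint inv_coefs (f : fps) (n : nat) : seq int :=
  match n with
  | 0 => [:: 1%R]
  | n'.+1 => let s := inv_coefs f n' in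
             rcons s (- \sum_(0 <= k < n) f (n - k)%N * nth 0%R s k)%R
  end.
(* reciprocal series (meaningful for f 0 = 1, the only use below) *)
Definition fps_inv (f : fps) : fps := fun n => nth 0%R (inv_coefs f n) n.

Definition Wgf : fps := fun n => Posz (w n 0).

From mathcomp Require Import all_boot all_order all_algebra.
Import GRing.Theory Num.Theory.
From mathcomp Require Import zify ring.
From Stdlib Require Import FunctionalExtensionality.

(* With parts in {1,2}, a composition holds no water iff no part 1 has a 2 on
   both sides, i.e. it has the shape 1^a 2^b 1^c.  Splitting off the first part,
   such a composition of n+2 is 1 followed by one of n+1, or 2 followed by a
   composition of n in which no 1 precedes a 2 (shape 2^b 1^a, n/2 + 1 of them);
   this recurrence gives w(n,0) = floor(n^2/4) + 1.  The generating-function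
   identities then hold coefficientwise, because the reciprocal of
   (1-q)^2(1-q^2) = 1 - 2q + 2q^3 - q^4 has coefficients floor((n+2)^2/4). *)

Lemma nat_ind2 (P : nat -> Prop) :
  P 0 -> P 1 -> (forall n, P n -> P n.+1 -> P n.+2) -> forall n, P n.
Proof.
move=> P0 P1 PSS n; suff: P n /\ P n.+1 by case.
by elim: n => [|n [Pn PSn]]; split => //; apply: PSS.
Qed.

Definition all12 (c : seq nat) := all (fun x => x \in [:: 1; 2]) c.

Lemma nth_all12 c j : all12 c -> nth 0 c j <= 2.
Proof.
move=> c12; case: (ltnP j (size c)) => hj; last by rewrite nth_default.
by have := allP c12 _ (mem_nth 0 hj); rewrite !inE => /orP [] /eqP ->.
Qed.

Lemma all12_size c : all12 c -> size c <= sumn c.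
Proof.
elim: c => //= x t IH /andP [hx /IH]; move: hx; rewrite !inE => /orP [] /eqP ->; lia.
Qed.

Definition trapped (c : seq nat) := has (fun i =>
  [&& nth 0 c i == 1, 2 \in take i c & 2 \in drop i.+1 c]) (iota 0 (size c)).

Definition ascent (c : seq nat) := has (fun i =>
  (nth 0 c i == 1) && (2 \in drop i.+1 c)) (iota 0 (size c)).

Lemma has_iotaS (P : pred nat) n :
  has P (iota 0 n.+1) = P 0 || has (fun i => P i.+1) (iota 0 n).
Proof. by rewrite /= -(addn0 1) iotaDl has_map. Qed.

Lemma trapped_cons x t : trapped (x :: t) = (x == 2) && ascent t || trapped t.
Proof.
rewrite /trapped /ascent [size _]/= has_iotaS /= andbF /=.
case: eqP => [->|nx] /=.
  rewrite -has_predU; apply: eq_has => i /=.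
  by case: (nth 0 t i == 1); case: (2 \in drop i.+1 t) => /=; rewrite ?andbF ?orbF ?orbT.
have x2F : (2 == x) = false by apply/eqP => e; case: nx.
by apply: eq_has => i /=; rewrite in_cons x2F.
Qed.

Lemma ascent_cons x t : ascent (x :: t) = (x == 1) && (2 \in t) || ascent t.
Proof. by rewrite /ascent [size _]/= has_iotaS /= drop0. Qed.

Lemma trapped_ascent t : trapped t -> ascent t.
Proof. by apply: sub_has => i /and3P [-> _ ->]. Qed.

Lemma ascent_mem2 t : ascent t -> 2 \in t.
Proof. by case/hasP => i _ /andP [_ /mem_drop]. Qed.

Lemma trapped_cons1 t : trapped (1 :: t) = trapped t.
Proof. by rewrite trapped_cons. Qed.

Lemma trapped_cons2 t : trapped (2 :: t) = ascent t.
Proof. by rewrite trapped_cons /=; case: (boolP (trapped t)) => [/trapped_ascent ->|]; rewrite ?orbF. Qed.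

Lemma ascent_cons1 t : ascent (1 :: t) = (2 \in t).
Proof. by rewrite ascent_cons /=; case: (boolP (ascent t)) => [/ascent_mem2 ->|]; rewrite ?orbF. Qed.

Lemma ascent_cons2 t : ascent (2 :: t) = ascent t.
Proof. by rewrite ascent_cons. Qed.

Section WaterFree.

Variable c : seq nat.
Hypothesis c12 : all12 c.

Lemma bigmax_all12_le1 (r : seq nat) (P : pred nat) :
  (\max_(j <- r | P j) nth 0 c j <= 1) = ~~ has (fun j => P j && (nth 0 c j == 2)) r.
Proof.
apply/bigmax_leqP_seq/hasPn => H j jr.
  by apply/negP => /andP [pj /eqP e]; have := H j jr pj; rewrite e.
by move=> pj; have := H j jr; rewrite pj /=; have := @nth_all12 c j c12; case: (nth 0 c j) => [|[|[|]]].
Qed.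

Variable i : nat.
Hypotheses (ci : nth 0 c i = 1) (ilt : i < size c).

Lemma has_two_before :
  has (fun j => (j <= i) && (nth 0 c j == 2)) (index_iota 0 (size c)) = (2 \in take i c).
Proof.
rewrite /index_iota subn0; apply/hasP/(nthP 0).
  move=> [j]; rewrite mem_iota => /andP [_ jn] /andP [ji /eqP cj].
  have jlt : j < i by rewrite ltn_neqAle ji andbT; apply: contra_eq_neq cj => ->; rewrite ci.
  by exists j; rewrite ?size_take ?ilt ?nth_take.
move=> [j]; rewrite size_take ilt => ji cj; exists j.
  by rewrite mem_iota /= (ltn_trans ji).
by rewrite (ltnW ji) /= -cj nth_take.
Qed.

Lemma has_two_after :
  has (fun j => (i <= j) && (nth 0 c j == 2)) (index_iota 0 (size c)) = (2 \in drop i.+1 c).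
Proof.
rewrite /index_iota subn0; apply/hasP/(nthP 0).
  move=> [j]; rewrite mem_iota => /andP [_ jn] /andP [ij /eqP cj].
  have jlt : i < j by rewrite ltn_neqAle ij andbT; apply: contra_eq_neq cj => <-; rewrite ci.
  exists (j - i.+1); last by rewrite nth_drop subnKC.
  by rewrite size_drop ltn_sub2r // (leq_ltn_trans jlt).
move=> [j]; rewrite size_drop => ji cj; exists (i.+1 + j).
  by rewrite mem_iota /= -ltn_subRL.
by rewrite -nth_drop cj eqxx andbT ltnW // leq_addr.
Qed.

End WaterFree.

(* With parts in {1,2}, column i holds water iff c_i = 1 and a 2 lies on each side of it. *)
Lemma water_eq0 c : all12 c -> (water c == 0) = ~~ trapped c.
Proof.
move=> c12; rewrite /water sum_nat_seq_eq0 /trapped -all_predC.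
rewrite [index_iota _ _]/index_iota subn0; apply: eq_in_all => i; rewrite mem_iota /= => ilt.
rewrite subn_eq0 geq_min.
have := allP c12 _ (mem_nth 0 ilt); rewrite !inE => /orP [] /eqP ci; rewrite ci /=.
  rewrite !bigmax_all12_le1 // -[size c]subn0 -/(index_iota 0 (size c)).
  by rewrite has_two_before ?has_two_after ?subn0 // negb_and.
by apply/orP; left; apply/bigmax_leqP_seq => j _ _; apply: nth_all12.
Qed.

Fixpoint comps12 (n : nat) : seq (seq nat) :=
  match n with
  | 0 => [:: [::]]
  | 1 => [:: [:: 1]]
  | (m.+1 as n').+1 => map (cons 1) (comps12 n') ++ map (cons 2) (comps12 m)
  end.

Lemma comps12SS n :
  comps12 n.+2 = map (cons 1) (comps12 n.+1) ++ map (cons 2) (comps12 n).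
Proof. by []. Qed.

Lemma mem_map_cons (x y : nat) t (S : seq (seq nat)) :
  (y :: t \in map (cons x) S) = (y == x) && (t \in S).
Proof.
by apply/mapP/andP => [[u uS [-> ->]] | [/eqP -> tS]]; last exists t.
Qed.

Lemma mem_comps12 n s : (s \in comps12 n) = (sumn s == n) && all12 s.
Proof.
elim/nat_ind2: n s => [s|s|n IHn IHSn [|x t]].
- rewrite inE; apply/eqP/andP => [->|[/eqP s0 /all12_size]] //.
  by rewrite s0 leqn0 size_eq0 => /eqP.
- rewrite inE; apply/eqP/andP => [->|[/eqP + /all12_size]] //.
  case: s => [|x [|y t]] //=; last by move=> ->.
  by rewrite addn0 => ->.
- by rewrite comps12SS mem_cat; apply/negbTE; rewrite negb_or; apply/andP; split; apply/mapP => -[].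
rewrite comps12SS mem_cat !mem_map_cons IHn IHSn /all12 /= !inE.
by case: x => [|[|[|x]]] /=; rewrite ?orbF ?andbF.
Qed.

Lemma uniq_map_cons x (S : seq (seq nat)) : uniq S -> uniq (map (cons x) S).
Proof. by move=> u; rewrite map_inj_uniq // => a b [->]. Qed.

Lemma uniq_comps12 n : uniq (comps12 n).
Proof.
elim/nat_ind2: n => // n IHn IHSn.
rewrite comps12SS cat_uniq !uniq_map_cons //= andbT.
by apply/hasP => -[x /mapP [u _ ->] /mapP [v _]].
Qed.

Lemma mem_seqs12 m s : (s \in seqs12 m) = (size s <= m) && all12 s.
Proof.
elim: m s => [|m IH] [|x t] //=.
rewrite in_cons /= cats0 mem_cat !mem_map_cons !IH /all12 /= !inE.
by case: x => [|[|[|x]]]; rewrite /= ?andbF ?orbF.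
Qed.

Lemma uniq_seqs12 m : uniq (seqs12 m).
Proof.
elim: m => //= m IH; rewrite cats0 mem_cat cat_uniq !uniq_map_cons //= andbT.
apply/andP; split; first by rewrite negb_or; apply/andP; split; apply/mapP => -[].
by apply/hasP => -[x /mapP [u _ ->] /mapP [v _]].
Qed.

Lemma perm_C12_comps12 n : perm_eq (C12 n) (comps12 n).
Proof.
apply: uniq_perm; rewrite ?filter_uniq ?uniq_seqs12 ?uniq_comps12 // => s.
rewrite mem_filter mem_seqs12 mem_comps12.
case: eqP => //= <-; case: (boolP (all12 s)) => s12; rewrite ?andbF //.
by move: (s12); rewrite /all12 => -> /=; rewrite all12_size.
Qed.

Lemma count_comps12SS (P : pred (seq nat)) n :
  count P (comps12 n.+2) = count (P \o cons 1) (comps12 n.+1) + count (P \o cons 2) (comps12 n).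
Proof. by rewrite comps12SS count_cat !count_map. Qed.

Lemma count_no2 n : count (fun c => 2 \notin c) (comps12 n) = 1.
Proof.
elim/nat_ind2: n => // n _ IHSn.
rewrite count_comps12SS [X in _ + X](eq_count (a2 := pred0)) // count_pred0 addn0.
by rewrite -[RHS]IHSn; apply: eq_count => t; rewrite /= in_cons.
Qed.

Lemma count_no_ascent n : count (predC ascent) (comps12 n) = n %/ 2 + 1.
Proof.
elim/nat_ind2: n => // n IHn _.
rewrite count_comps12SS (eq_count (a2 := fun c => 2 \notin c)) ?count_no2; last first.
  by move=> t; rewrite /= ascent_cons1.
rewrite (eq_count (a2 := predC ascent)) ?IHn; first lia.
by move=> t; rewrite /= ascent_cons2.
Qed.

Lemma count_untrapped n : count (predC trapped) (comps12 n) = n * n %/ 4 + 1.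
Proof.
elim/nat_ind2: n => // n _ IHSn.
rewrite count_comps12SS (eq_count (a2 := predC trapped)) ?IHSn; last first.
  by move=> t; rewrite /= trapped_cons1.
rewrite (eq_count (a2 := predC ascent)) ?count_no_ascent; first nia.
by move=> t; rewrite /= trapped_cons2.
Qed.

Lemma quarter_sqSS n : (n.+2 * n.+2) %/ 4 = n * n %/ 4 + n + 1.
Proof. nia. Qed.

Lemma w0E n : w n 0 = n * n %/ 4 + 1.
Proof.
rewrite /w (permP (perm_C12_comps12 n)) -count_untrapped.
by apply: eq_in_count => c; rewrite mem_comps12 => /andP [_ /water_eq0].
Qed.

Local Open Scope ring_scope.

Lemma size_inv_coefs f n : size (inv_coefs f n) = n.+1.
Proof. by elim: n => //= n IH; rewrite size_rcons IH. Qed.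

Lemma nth_inv_coefs f n k : (k <= n)%N -> nth 0 (inv_coefs f n) k = fps_inv f k.
Proof.
elim: n => [|n IH]; first by rewrite leqn0 => /eqP ->.
rewrite leq_eqVlt => /orP [/eqP -> //|kn].
by rewrite /= nth_rcons size_inv_coefs kn IH.
Qed.

Lemma fps_invS f n :
  fps_inv f n.+1 = - \sum_(0 <= k < n.+1) f (n.+1 - k)%N * fps_inv f k.
Proof.
rewrite {1}/fps_inv /= nth_rcons size_inv_coefs ltnn eqxx.
by congr (- _); apply: eq_big_nat => k /andP [_ kn]; rewrite nth_inv_coefs.
Qed.

Lemma fps_mul_rev f g n : fps_mul f g n = \sum_(0 <= k < n.+1) f (n - k)%N * g k.
Proof.
rewrite /fps_mul big_nat_rev; apply: eq_big_nat => i /andP [_ ilt].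
by rewrite add0n subSS subKn.
Qed.

Lemma fps_inv_unique f g : f 0%N = 1 -> g 0%N = 1 ->
  (forall n, fps_mul f g n.+1 = 0) -> fps_inv f = g.
Proof.
move=> f0 g0 fg1; apply: functional_extensionality => n.
elim/ltn_ind: n => -[|n] IH //; rewrite fps_invS.
move/eqP: (fg1 n); rewrite fps_mul_rev big_nat_recr //= subnn f0 mul1r addrC addr_eq0.
move=> /eqP ->; congr (- _); apply: eq_big_nat => k /andP [_ kn].
by rewrite IH // ltnW.
Qed.

Lemma fps_mul_polyE s g n : (size s <= n.+1)%N ->
  fps_mul (fps_poly s) g n = \sum_(0 <= i < size s) s`_i * g (n - i)%N.
Proof.
move=> sn; rewrite /fps_mul (big_cat_nat (leq0n (size s)) sn) /=.
rewrite [X in _ + X]big1_seq ?addr0 // => i /andP [_]; rewrite mem_index_iota.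
by case/andP => si _; rewrite /fps_poly nth_default // mul0r.
Qed.

Definition fps_of_poly (p : {poly int}) : fps := fun n => p`_n.

Lemma fps_poly_Poly s : fps_poly s = fps_of_poly (Poly s).
Proof. by apply: functional_extensionality => n; rewrite /fps_of_poly coef_Poly. Qed.

Lemma fps_mul_poly p q : fps_mul (fps_of_poly p) (fps_of_poly q) = fps_of_poly (p * q).
Proof. by apply: functional_extensionality => n; rewrite /fps_of_poly coefM /fps_mul big_mkord. Qed.

Lemma fps_inv_1subX : fps_inv (fps_poly [:: 1; -1]) = fun=> 1.
Proof.
apply: fps_inv_unique => // n.
by rewrite fps_mul_polyE //= !big_nat_recl // big_geq.
Qed.

Lemma fps_inv_den :
  fps_inv (fps_poly [:: 1; -2; 0; 2; -1]) = fun n => ((n.+2 * n.+2) %/ 4)%:Z.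
Proof.
apply: fps_inv_unique => // -[|[|[|n]]]; try by rewrite /fps_mul unlock.
rewrite fps_mul_polyE //= !big_nat_recl // big_geq //= !subn0 !quarter_sqSS; lia.
Qed.

Lemma den_factor :
  fps_mul (fps_mul (fps_poly [:: 1; -1]) (fps_poly [:: 1; -1])) (fps_poly [:: 1; 0; -1])
  = fps_poly [:: 1; -2; 0; 2; -1].
Proof.
by rewrite !fps_poly_Poly !fps_mul_poly; congr fps_of_poly; rewrite /= !cons_poly_def; ring.
Qed.

Lemma fps_mul_X2 g n : fps_mul (fps_poly [:: 0; 0; 1]) g n.+2 = g n.
Proof.
by rewrite fps_mul_polyE //= !big_nat_recl // big_geq //= !mul0r mul1r !add0r addr0 subn2.
Qed.

Local Close Scope ring_scope.

Theorem theorem2p1 :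
  (Wgf = fps_add (fps_inv (fps_poly [:: 1; -1]%R))
                 (fps_mul (fps_poly [:: 0; 0; 1]%R)
                    (fps_inv (fps_mul (fps_mul (fps_poly [:: 1; -1]%R)
                                               (fps_poly [:: 1; -1]%R))
                                      (fps_poly [:: 1; 0; -1]%R)))))
  /\ (Wgf = fps_mul (fps_poly [:: 1; -1; 0; 1]%R)
                    (fps_inv (fps_poly [:: 1; -2; 0; 2; -1]%R)))
  /\ (forall n : nat, w n 0 = (n * n) %/ 4 + 1)
  /\ (forall n : nat, 2 <= n -> w n 0 = w (n - 2) 0 + n - 1)
  /\ (forall n : nat, 4 <= n ->
        Posz (w n 0) = (2 * Posz (w (n - 1) 0) - 2 * Posz (w (n - 3) 0)
                      + Posz (w (n - 4) 0))%R).
Proof.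
have Wgf_sq n : Wgf n = Posz (n * n %/ 4 + 1) by rewrite /Wgf w0E.
split.
  rewrite den_factor fps_inv_den fps_inv_1subX; apply: functional_extensionality.
  case=> [|[|n]]; rewrite /fps_add Wgf_sq; try by rewrite /fps_mul unlock.
  by rewrite fps_mul_X2 addnC.
split.
  rewrite fps_inv_den; apply: functional_extensionality.
  case=> [|[|[|n]]]; rewrite Wgf_sq; try by rewrite /fps_mul unlock.
  rewrite fps_mul_polyE //= !big_nat_recl // big_geq //= !subn0 !quarter_sqSS; lia.
split; first exact: w0E.
split=> [[|[|n]] // _|[|[|[|[|n]]]] // _]; rewrite !w0E ?subSS ?subn0 !quarter_sqSS; lia.
Qed.
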